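(* Assume $G$ is connected. Let $S_n\subset V$ be nonempty with $S_n\ne V$, and let $\delta t>0$. For $\hat S\subset V$ define $$\mathcal F(\hat S,S_n)=\mathrm{TV}^q_a(\chi_{\hat S})-\mathrm{TV}^q_a(\chi_{S_n})+\frac1{\delta t}\big\langle\chi_{\hat S}-\chi_{S_n},(\chi_{\hat S}-\chi_{S_n})\,d^{\Sigma_n}\big\rangle_{\mathcal V},$$ $$\mathcal F'(\hat S,S_n)=\mathrm{TV}^q_a(\chi_{\hat S})-\mathrm{TV}^q_a(\chi_{S_n})+\frac1{\delta t}\big\langle\chi_{\hat S},sd^{\Sigma_n}\big\rangle_{\mathcal V}.$$ Here the product $(\chi_{\hat S}-\chi_{S_n})\,d^{\Sigma_n}$ is pointwise. Then $$\operatorname*{argmin}_{\hat S\subset V}\mathcal F(\hat S,S_n)=\operatorname*{argmin}_{\hat S\subset V}\mathcal F'(\hat S,S_n),$$ and moreover $\mathcal F'(\hat S,S_n)=\langle\kappa^{q,r}_{\hat S}+\kappa^{q,r}_{S_n},\chi_{\hat S}-\chi_{S_n}\rangle_{\mathcal V}+\frac1{\delta t}\langle\chi_{\hat S},sd^{\Sigma_n}\rangle_{\mathcal V}$.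
   Context: $G=(V,E)$ is a finite undirected weighted graph with vertex set $V=\{1,\dots,n\}$. The weights satisfy $\omega_{ij}=\omega_{ji}\ge0$, with $\omega_{ij}>0$ iff $\{i,j\}\in E$, and $\omega_{ii}=0$. The degrees are $d_i=\sum_j\omega_{ij}>0$. Parameters $r\in[0,1]$ and $q\in[1/2,1]$ are fixed, and $\omega_{ij}^q:=0$ when $\omega_{ij}=0$. $\mathcal V$ is the space of functions $V\to\mathbb R$ with $\langle u,v\rangle_{\mathcal V}=\sum_iu_iv_id_i^r$, and $\chi_S$ is the indicator of $S$; $S^c=V\setminus S$. The anisotropic total variation is $\mathrm{TV}^q_a(u)=\frac12\sum_{i,j}\omega_{ij}^q|u_i-u_j|$. The curvature $\kappa^{q,r}_S$ is given by $(\kappa^{q,r}_S)_i=d_i^{-r}\sum_{j\notin S}\omega_{ij}^q$ for $i\in S$, and $(\kappa^{q,r}_S)_i=-d_i^{-r}\sum_{j\in S}\omega_{ij}^q$ for $i\notin S$. Graph distance: each edge $\{i,j\}$ with $\omega_{ij}>0$ has length $\omega_{ij}^{q-1}$. The distance $d^G_{ij}$ is the minimum total length of a path from $i$ to $j$ along edges, with $d^G_{ii}=0$. For nonempty $T\subset V$, $d^T_i=\min_{j\in T}d^G_{ij}$. Boundary: $\partial S=\{i\in S:\exists j\notin S,\ \omega_{ij}>0\}$, and $\Sigma_n=\partial S_n\cup\partial(S_n^c)$, the set of nodes incident to an edge joining $S_n$ and $S_n^c$. The signed distance is $sd^{\Sigma_n}=(\chi_{S_n^c}-\chi_{S_n})\,d^{\Sigma_n}$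 (pointwise product). *)

From Stdlib Require Import Reals Lra List Bool ClassicalEpsilon.
Import ListNotations.
Open Scope R_scope.

(* Vertices are 0, ..., n-1 (the paper's 1..n shifted). Weights w : nat -> nat -> R,
   only values on vertices matter. Subsets of V are boolean predicates nat -> bool,
   only their values on 0..n-1 matter. *)

Definition vsum (n : nat) (f : nat -> R) : R :=
  fold_right Rplus 0 (map f (seq 0 n)).

(* omega_ij^q with the convention 0^q := 0 *)
Definition wq (w : nat -> nat -> R) (q : R) (i j : nat) : R :=
  if Rlt_dec 0 (w i j) then Rpower (w i j) q else 0.

Definition deg (n : nat) (w : nat -> nat -> R) (i : nat) : R := vsum n (fun j => w i j).

Definition ipV (n : nat) (w : nat -> nat -> R) (r : R) (u v : nat -> R) : R :=
  vsum n (fun i => u i * v i * Rpower (deg n w i) r).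

Definition chi (S : nat -> bool) (i : nat) : R := if S i then 1 else 0.

Definition TVa (n : nat) (w : nat -> nat -> R) (q : R) (u : nat -> R) : R :=
  / 2 * vsum n (fun i => vsum n (fun j => wq w q i j * Rabs (u i - u j))).

Definition kappa (n : nat) (w : nat -> nat -> R) (q r : R) (S : nat -> bool) (i : nat) : R :=
  if S i then Rpower (deg n w i) (- r) * vsum n (fun j => if S j then 0 else wq w q i j)
  else - (Rpower (deg n w i) (- r) * vsum n (fun j => if S j then wq w q i j else 0)).

Fixpoint walk (n : nat) (w : nat -> nat -> R) (i : nat) (l : list nat) (j : nat) : Prop :=
  match l with
  | [] => i = j
  | k :: l' => (k < n)%nat /\ 0 < w i k /\ walk n w k l' j
  end.

Fixpoint walk_len (w : nat -> nat -> R) (q : R) (i : nat) (l : list nat) : R :=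
  match l with
  | [] => 0
  | k :: l' => Rpower (w i k) (q - 1) + walk_len w q k l'
  end.

Definition is_graph_dist (n : nat) (w : nat -> nat -> R) (q : R) (i j : nat) (d : R) : Prop :=
  (exists l, walk n w i l j /\ walk_len w q i l = d) /\
  (forall l, walk n w i l j -> d <= walk_len w q i l).

(* graph distance d^G_ij (the minimum; well defined when it exists, e.g. G connected) *)
Definition dG (n : nat) (w : nat -> nat -> R) (q : R) (i j : nat) : R :=
  epsilon (inhabits 0) (is_graph_dist n w q i j).

Definition list_min (f : nat -> R) (l : list nat) : R :=
  match l with
  | [] => 0
  | j :: l' => fold_right (fun k m => Rmin (f k) m) (f j) l'
  end.

Definition dset (n : nat) (w : nat -> nat -> R) (q : R) (T : nat -> bool) (i : nat) : R :=
  list_min (fun j => dG n w q i j) (filter T (seq 0 n)).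

(* Sigma_n = boundary of S union boundary of S^c: nodes incident to an edge joining S and S^c *)
Definition Sigma (n : nat) (w : nat -> nat -> R) (S : nat -> bool) (i : nat) : bool :=
  existsb (fun j => if Rlt_dec 0 (w i j) then xorb (S i) (S j) else false) (seq 0 n).

Definition sd (n : nat) (w : nat -> nat -> R) (q : R) (S : nat -> bool) (i : nat) : R :=
  (chi (fun k => negb (S k)) i - chi S i) * dset n w q (Sigma n w S) i.

Definition Fmm (n : nat) (w : nat -> nat -> R) (q r dt : R) (Sh Sn : nat -> bool) : R :=
  TVa n w q (chi Sh) - TVa n w q (chi Sn)
  + / dt * ipV n w r (fun i => chi Sh i - chi Sn i)
                     (fun i => (chi Sh i - chi Sn i) * dset n w q (Sigma n w Sn) i).

Definition Fmm' (n : nat) (w : nat -> nat -> R) (q r dt : R) (Sh Sn : nat -> bool) : R :=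
  TVa n w q (chi Sh) - TVa n w q (chi Sn) + / dt * ipV n w r (chi Sh) (sd n w q Sn).

Definition connected (n : nat) (w : nat -> nat -> R) : Prop :=
  forall i j, (i < n)%nat -> (j < n)%nat -> exists l, walk n w i l j.

From Stdlib Require Import Reals List Lra.
Open Scope R_scope.

(* The theorem is an algebraic identity about finite sums over the vertices.

   1. F and F' differ by a quantity that does not depend on Shat: since
      chi_Shat and chi_Sn are indicators, (chi_Shat - chi_Sn)^2 equals
      chi_Shat (chi_{S_n^c} - chi_Sn) + chi_Sn, so the quadratic penalty of F
      is the linear penalty of F' plus <chi_Sn, d^Sigma_n>.  Functionals
      differing by a constant have the same minimisers.
   2. For indicators |chi_S i - chi_S j| = (chi_S i - chi_S j)^2, so the
      total variation of an indicator is a Dirichlet energy.  Writing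
      a^2 - b^2 = (a - b)(a + b) and polarising the Dirichlet form with the
      symmetric weights omega^q, TV(chi_Shat) - TV(chi_Sn) becomes
      sum_ij omega_ij^q u_i (v_i - v_j) with u = chi_Shat - chi_Sn and
      v = chi_Shat + chi_Sn; this is exactly <kappa_Shat + kappa_Sn, u>,
      because d_i^r kappa_S i = sum_j omega_ij^q (chi_S i - chi_S j).

   The hypotheses of connectedness and nonemptiness only make d^Sigma_n
   meaningful; the identities use merely the symmetry of omega and d_i > 0.
   The file develops the calculus of vertex sums, then the two steps above,
   and derives the theorem from them. *)

Lemma fold_right_plus_shift (l : list R) (a : R) :
  fold_right Rplus a l = fold_right Rplus 0 l + a.
Proof. induction l as [|x l IH]; simpl; [ring | rewrite IH; ring]. Qed.

Lemma vsum_S n f : vsum (S n) f = vsum n f + f n.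
Proof.
  unfold vsum. rewrite seq_S, map_app, fold_right_app. simpl.
  rewrite fold_right_plus_shift. ring.
Qed.

Lemma vsum_ext n f g : (forall i, (i < n)%nat -> f i = g i) -> vsum n f = vsum n g.
Proof.
  induction n as [|n IH]; intros H; [reflexivity|].
  rewrite !vsum_S, IH, H; auto.
Qed.

Lemma vsum_plus n f g : vsum n (fun i => f i + g i) = vsum n f + vsum n g.
Proof.
  induction n as [|n IH]; [cbn; ring|]. rewrite !vsum_S, IH. ring.
Qed.

Lemma vsum_scal n c f : vsum n (fun i => c * f i) = c * vsum n f.
Proof.
  induction n as [|n IH]; [cbn; ring|]. rewrite !vsum_S, IH. ring.
Qed.

Lemma vsum_minus n f g : vsum n (fun i => f i - g i) = vsum n f - vsum n g.
Proof.
  induction n as [|n IH]; [cbn; ring|]. rewrite !vsum_S, IH. ring.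
Qed.

Lemma vsum_swap m k (f : nat -> nat -> R) :
  vsum m (fun i => vsum k (fun j => f i j)) = vsum k (fun j => vsum m (fun i => f i j)).
Proof.
  induction m as [|m IH].
  - induction k as [|k IHk]; [reflexivity|]. rewrite vsum_S, <- IHk. cbn. ring.
  - rewrite vsum_S, IH, <- vsum_plus. apply vsum_ext. intros. rewrite vsum_S. ring.
Qed.

Lemma argmin_shift {X : Type} (f g : X -> R) (c : R) :
  (forall x, f x = g x + c) ->
  forall x, (forall y, f x <= f y) <-> (forall y, g x <= g y).
Proof.
  intros Hfg x; split; intros H y; specialize (H y); rewrite !Hfg in *; lra.
Qed.

Lemma chi_sq_diff (Sh Sn : nat -> bool) (i : nat) :
  (chi Sh i - chi Sn i) * (chi Sh i - chi Sn i)
  = chi Sh i * (chi (fun k => negb (Sn k)) i - chi Sn i) + chi Sn i.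
Proof. unfold chi; destruct (Sh i), (Sn i); simpl; ring. Qed.

Lemma Fmm_Fmm'_shift n w q r dt (Sh Sn : nat -> bool) :
  Fmm n w q r dt Sh Sn
  = Fmm' n w q r dt Sh Sn
    + / dt * vsum n (fun i => chi Sn i * dset n w q (Sigma n w Sn) i * Rpower (deg n w i) r).
Proof.
  unfold Fmm, Fmm', ipV, sd.
  rewrite Rplus_assoc, <- Rmult_plus_distr_l, <- vsum_plus.
  do 2 f_equal. apply vsum_ext. intros i _.
  transitivity ((chi Sh i - chi Sn i) * (chi Sh i - chi Sn i)
                * dset n w q (Sigma n w Sn) i * Rpower (deg n w i) r); [ring|].
  rewrite chi_sq_diff. ring.
Qed.

Lemma chi_abs S i j : Rabs (chi S i - chi S j) = (chi S i - chi S j) * (chi S i - chi S j).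
Proof.
  unfold chi; destruct (S i), (S j);
    [ replace (1 - 1) with 0 by ring; rewrite Rabs_R0
    | replace (1 - 0) with 1 by ring; rewrite Rabs_R1
    | replace (0 - 1) with (- (1)) by ring; rewrite Rabs_Ropp, Rabs_R1
    | replace (0 - 0) with 0 by ring; rewrite Rabs_R0 ]; ring.
Qed.

Lemma dirichlet_polarization n (W : nat -> nat -> R) (u v : nat -> R) :
  (forall i j, W i j = W j i) ->
  / 2 * vsum n (fun i => vsum n (fun j => W i j * (u i - u j) * (v i - v j)))
  = vsum n (fun i => vsum n (fun j => W i j * u i * (v i - v j))).
Proof.
  intros HW.
  set (G := fun i j => W i j * u i * (v i - v j)).
  assert (Hsplit : vsum n (fun i => vsum n (fun j => W i j * (u i - u j) * (v i - v j)))
                   = vsum n (fun i => vsum n (fun j => G i j))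
                     + vsum n (fun i => vsum n (fun j => G j i))).
  { rewrite <- vsum_plus. apply vsum_ext. intros i _. rewrite <- vsum_plus.
    apply vsum_ext. intros j _. unfold G. rewrite (HW j i). ring. }
  rewrite Hsplit, <- (vsum_swap n n G). unfold G; cbv beta. lra.
Qed.

Lemma wq_sym w q : (forall i j, w i j = w j i) -> forall i j, wq w q i j = wq w q j i.
Proof. intros hsym i j. unfold wq. rewrite (hsym i j). reflexivity. Qed.

Lemma TVa_chi_diff n w q (Sh Sn : nat -> bool) :
  (forall i j, w i j = w j i) ->
  TVa n w q (chi Sh) - TVa n w q (chi Sn)
  = vsum n (fun i => vsum n (fun j =>
      wq w q i j * (chi Sh i - chi Sn i)
      * ((chi Sh i + chi Sn i) - (chi Sh j + chi Sn j)))).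
Proof.
  intros hsym.
  rewrite <- (dirichlet_polarization n (wq w q) (fun i => chi Sh i - chi Sn i)
                (fun i => chi Sh i + chi Sn i) (wq_sym w q hsym)).
  unfold TVa. rewrite <- Rmult_minus_distr_l. f_equal.
  rewrite <- vsum_minus. apply vsum_ext. intros i _.
  rewrite <- vsum_minus. apply vsum_ext. intros j _.
  rewrite !chi_abs. ring.
Qed.

Lemma kappa_weighted n w q r (S : nat -> bool) i :
  0 < deg n w i ->
  kappa n w q r S i * Rpower (deg n w i) r
  = vsum n (fun j => wq w q i j * (chi S i - chi S j)).
Proof.
  intros Hd.
  assert (Hinv : Rpower (deg n w i) (- r) * Rpower (deg n w i) r = 1).
  { rewrite <- Rpower_plus. replace (- r + r) with 0 by ring. apply Rpower_O, Hd. }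
  unfold kappa, chi. destruct (S i).
  - transitivity (Rpower (deg n w i) (- r) * Rpower (deg n w i) r
                  * vsum n (fun j => if S j then 0 else wq w q i j)); [ring|].
    rewrite Hinv, Rmult_1_l. apply vsum_ext. intros j _. destruct (S j); ring.
  - transitivity (- (1) * (Rpower (deg n w i) (- r) * Rpower (deg n w i) r)
                  * vsum n (fun j => if S j then wq w q i j else 0)); [ring|].
    rewrite Hinv, Rmult_1_r, <- vsum_scal. apply vsum_ext. intros j _. destruct (S j); ring.
Qed.

Lemma TVa_diff_curvature n w q r (Sh Sn : nat -> bool) :
  (forall i j, w i j = w j i) ->
  (forall i, (i < n)%nat -> 0 < deg n w i) ->
  TVa n w q (chi Sh) - TVa n w q (chi Sn)
  = ipV n w r (fun i => kappa n w q r Sh i + kappa n w q r Sn i)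
              (fun i => chi Sh i - chi Sn i).
Proof.
  intros hsym hdeg. rewrite TVa_chi_diff by exact hsym.
  unfold ipV. apply vsum_ext. intros i Hi.
  transitivity ((chi Sh i - chi Sn i)
                * (kappa n w q r Sh i * Rpower (deg n w i) r
                   + kappa n w q r Sn i * Rpower (deg n w i) r)); [|ring].
  rewrite !kappa_weighted by auto. rewrite <- vsum_plus, <- vsum_scal.
  apply vsum_ext. intros j _. ring.
Qed.

Theorem mainTheorem7
  (n : nat) (w : nat -> nat -> R) (q r dt : R) (Sn : nat -> bool)
  (hsym : forall i j, w i j = w j i)
  (hnn : forall i j, 0 <= w i j)
  (hdiag : forall i, w i i = 0)
  (hdeg : forall i, (i < n)%nat -> 0 < deg n w i)
  (hr : 0 <= r <= 1)
  (hq : / 2 <= q <= 1)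
  (hconn : connected n w)
  (hSne : exists i, (i < n)%nat /\ Sn i = true)
  (hSnV : exists i, (i < n)%nat /\ Sn i = false)
  (hdt : 0 < dt) :
  (forall Sh : nat -> bool,
      (forall T : nat -> bool, Fmm n w q r dt Sh Sn <= Fmm n w q r dt T Sn) <->
      (forall T : nat -> bool, Fmm' n w q r dt Sh Sn <= Fmm' n w q r dt T Sn)) /\
  (forall Sh : nat -> bool,
      Fmm' n w q r dt Sh Sn =
      ipV n w r (fun i => kappa n w q r Sh i + kappa n w q r Sn i)
                (fun i => chi Sh i - chi Sn i)
      + / dt * ipV n w r (chi Sh) (sd n w q Sn)).
Proof.
  split.
  - apply argmin_shift with
      (c := / dt * vsum n (fun i => chi Sn i * dset n w q (Sigma n w Sn) i
                                   * Rpower (deg n w i) r)).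
    intros Sh. apply Fmm_Fmm'_shift.
  - intros Sh. unfold Fmm'. rewrite (TVa_diff_curvature n w q r) by assumption. reflexivity.
Qed.
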